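(* Let $G=(V,E)$ be an infinite, connected, locally finite, vertex-transitive graph and $\Gamma$ a group of automorphisms of $G$ acting transitively on $V$. Suppose $h:V\to\mathbb{R}$ is a random function with $\Gamma$-invariant law and $\Delta h\equiv0$. If $h$ can be written as $h=v-u$ with random functions $u\ge0$ and $v$ satisfying $\sup_{x\in V}\mathbb{E}\,v(x)^+<\infty$, then $h$ is almost surely constant.
   Context: $\Delta u(x)=\sum_{y\sim x}(u(y)-u(x))$. A random function $h$ has $\Gamma$-invariant law if $(h(\alpha^{-1}x))_{x\in V}$ has the same law as $h$ for every $\alpha\in\Gamma$. $a^+=\max(a,0)$. *)

From HB Require Import structures.
From mathcomp Require Import all_boot all_order all_algebra.
From mathcomp Require Import all_classical all_reals all_analysis.
From Stdlib Require Import Relations.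
Set Implicit Arguments. Unset Strict Implicit. Unset Printing Implicit Defensive.
Import Order.TTheory GRing.Theory Num.Theory.
Local Open Scope classical_set_scope.
Local Open Scope ring_scope.

Definition simple_graph (V : Type) (adj : V -> V -> Prop) : Prop :=
  (forall x y, adj x y -> adj y x) /\ (forall x, ~ adj x x).

Definition neighbors (V : Type) (adj : V -> V -> Prop) (x : V) : set V :=
  [set y | adj x y].

Definition locally_finite (V : Type) (adj : V -> V -> Prop) : Prop :=
  forall x, finite_set (neighbors adj x).

Definition infinite_graph (V : Type) : Prop := ~ finite_set [set: V].

Definition connected_graph (V : Type) (adj : V -> V -> Prop) : Prop :=
  forall x y, clos_refl_trans V adj x y.

Definition automorphism (V : Type) (adj : V -> V -> Prop) (a : V -> V) : Prop :=
  bijective a /\ (forall x y, adj x y <-> adj (a x) (a y)).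

Definition vertex_transitive (V : Type) (adj : V -> V -> Prop) : Prop :=
  forall x y, exists a, automorphism adj a /\ a x = y.

Definition automorphism_group (V : Type) (adj : V -> V -> Prop)
  (Gamma : set (V -> V)) : Prop :=
  [/\ forall a, Gamma a -> automorphism adj a,
      Gamma id,
      forall a b, Gamma a -> Gamma b -> Gamma (a \o b)
    & forall a, Gamma a -> exists2 b, Gamma b & cancel a b /\ cancel b a].

Definition transitive_action (V : Type) (Gamma : set (V -> V)) : Prop :=
  forall x y, exists2 a, Gamma a & a x = y.

Definition laplacian (V : choiceType) (R : realType) (adj : V -> V -> Prop)
  (u : V -> R) (x : V) : R :=
  (\sum_(y \in neighbors adj x) (u y - u x))%R.

Definition coord_sets (V : Type) (R : realType) : set (set (V -> R)) :=
  [set A | exists x (B : set R), measurable B /\ A = (fun f => f x) @^-1` B].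

Definition prod_measurable (V : Type) (R : realType) : set (set (V -> R)) :=
  <<s @coord_sets V R >>.

Definition random_function (d : measure_display) (Omega : measurableType d)
  (R : realType) (V : Type) (h : Omega -> V -> R) : Prop :=
  forall x, measurable_fun setT (fun w => h w x).

Definition same_law (d : measure_display) (Omega : measurableType d)
  (R : realType) (P : probability Omega R) (V : Type)
  (h1 h2 : Omega -> V -> R) : Prop :=
  forall A, prod_measurable A -> P (h1 @^-1` A) = P (h2 @^-1` A).

Definition gamma_invariant_law (d : measure_display) (Omega : measurableType d)
  (R : realType) (P : probability Omega R) (V : Type)
  (Gamma : set (V -> V)) (h : Omega -> V -> R) : Prop :=
  forall a ainv, Gamma a -> cancel a ainv -> cancel ainv a ->
    same_law P (fun w x => h w (ainv x)) h.

(* Fix a vertex x and a level c.  Harmonicity makes h(x) the mean of h over the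
   neighbours of x, so by convexity of t |-> (t - c)^+ the quantity
   sum_{y ~ x} (h(y) - c)^+ - deg(x) (h(x) - c)^+ is nonnegative.  Its expectation
   vanishes: every h(y) has the law of h(x) by transitivity of Gamma, and
   (h(x) - c)^+ <= v(x)^+ + |c| is integrable.  So equality holds almost surely,
   simultaneously for all vertices and all rational c, V being countable as a
   connected locally finite graph.  Equality for all rational c forces h(y) = h(x)
   at every neighbour y, and connectedness concludes. *)

From HB Require Import structures.
From mathcomp Require Import all_boot all_order all_algebra.
From mathcomp Require Import all_classical all_reals all_analysis.
From mathcomp Require Import measurable_realfun.
From Stdlib Require Import Relations.

Set Implicit Arguments.
Unset Strict Implicit.
Unset Printing Implicit Defensive.
Import Order.TTheory GRing.Theory Num.Theory.
Local Open Scope classical_set_scope.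
Local Open Scope ring_scope.

Section mean_max0.
Variables (R : realDomainType) (I : Type) (s : seq I) (f : I -> R) (t : R).
Hypothesis f_mean : \sum_(i <- s) (f i - t) = 0.

Lemma sum_subr_mean (c : R) : \sum_(i <- s) (f i - c) = (size s)%:R * (t - c).
Proof.
under eq_bigr => i _ do rewrite -(subrK t (f i)) -addrA.
by rewrite big_split /= f_mean add0r big_const_seq count_predT iter_addr_0 mulr_natl.
Qed.

Lemma ler_mean_max0 (c : R) :
  (size s)%:R * Num.max (t - c) 0 <= \sum_(i <- s) Num.max (f i - c) 0.
Proof.
have [tc|tc] := leP 0 (t - c).
  by rewrite -sum_subr_mean; apply: ler_sum => i _; rewrite le_max lexx.
by rewrite mulr0 sumr_ge0 // => i _; rewrite le_max lexx orbT.
Qed.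

End mean_max0.

Lemma mean_max0_eq_const (R : realType) (I : eqType) (s : seq I) (f : I -> R) (t : R) :
  \sum_(i <- s) (f i - t) = 0 ->
  (forall q : rat, \sum_(i <- s) Num.max (f i - ratr q) 0
                   = (size s)%:R * Num.max (t - ratr q) 0) ->
  forall i, i \in s -> f i = t.
Proof.
move=> f_mean f_max0.
have f_le i : i \in s -> f i <= t.
  move=> si; rewrite leNgt; apply/negP => /rat_in_itvoo[q].
  rewrite in_itv /= => /andP[tq qf].
  have := f_max0 q; rewrite max_r ?subr_le0 ?ltW // mulr0 (big_rem i) //=.
  apply/eqP; rewrite gt_eqF // ltr_wpDr ?sumr_ge0 ?lt_max ?subr_gt0 ?qf //.
  by move=> j _; rewrite le_max lexx orbT.
move: f_mean; rewrite big_seq => /eqP; rewrite -oppr_eq0 -sumrN.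
rewrite psumr_eq0 => [/allP fE i si|i /f_le]; last by rewrite oppr_ge0 subr_le0.
by have /implyP/(_ si) := fE i si; rewrite oppr_eq0 subr_eq0 => /eqP.
Qed.

Section integral_lemmas.
Context d (T : measurableType d) (R : realType) (mu : measure T R).
Local Open Scope ereal_scope.

Lemma ge0_integral_comp_eq_law (X Y : T -> R) (g : R -> R) :
  measurable_fun setT X -> measurable_fun setT Y ->
  (forall B, measurable B -> mu (X @^-1` B) = mu (Y @^-1` B)) ->
  measurable_fun setT g -> (forall t, (0 <= g t)%R) ->
  \int[mu]_w (g (X w))%:E = \int[mu]_w (g (Y w))%:E.
Proof.
move=> mX mY XY mg g0.
have mgE : measurable_fun setT (EFin \o g) by apply/measurable_EFinP.
have push Z : measurable_fun setT Z ->
    \int[pushforward mu Z]_t (g t)%:E = \int[mu]_w (g (Z w))%:E.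
  by move=> mZ; rewrite ge0_integral_pushforward // => t _; rewrite lee_fin.
rewrite -push // -push //; apply: eq_measure_integral => A mA _.
exact: XY.
Qed.

Lemma ge0_le_integral_eq_ae_eq (f g : T -> R) :
  measurable_fun setT f -> measurable_fun setT g ->
  (forall w, 0 <= f w <= g w)%R ->
  \int[mu]_w (f w)%:E \is a fin_num ->
  \int[mu]_w (f w)%:E = \int[mu]_w (g w)%:E ->
  {ae mu, forall w, f w = g w}.
Proof.
move=> mf mg fg ffin int_fg.
have gf_ge0 w : (0 <= g w - f w)%R by rewrite subr_ge0; case/andP: (fg w).
have mgf : measurable_fun setT (fun w => (g w - f w)%:E).
  by apply/measurable_EFinP; exact: measurable_funB.
have int_gf : \int[mu]_w (g w - f w)%:E = 0.
  have : \int[mu]_w (g w)%:E = \int[mu]_w (f w)%:E + \int[mu]_w (g w - f w)%:E.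
    rewrite -ge0_integralD //.
    - by apply: eq_integral => w _; rewrite -EFinD addrC subrK.
    - by move=> w _; rewrite lee_fin; case/andP: (fg w).
    - by apply/measurable_EFinP.
    - by move=> w _; rewrite lee_fin.
  rewrite -int_fg; move: (\int[mu]_w (g w - f w)%:E) => b fE.
  by rewrite -(addeK b ffin) (addeC b) -fE subee.
have := (ae_eq_integral_abs mu measurableT mgf).1.
have -> : \int[mu]_w `|(g w - f w)%:E| = \int[mu]_w (g w - f w)%:E.
  by apply: eq_integral => w _; rewrite gee0_abs // lee_fin.
move=> /(_ int_gf); apply: filterS => w /(_ I) [/eqP].
by rewrite subr_eq0 => /eqP.
Qed.

End integral_lemmas.

Lemma max0_subr_integral_fin_num (R : realType) d (T : measurableType d)
    (P : probability T R) (X Y : T -> R) (c M : R) :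
  measurable_fun setT X -> measurable_fun setT Y -> (forall w, X w <= Y w) ->
  (\int[P]_w (Num.max (Y w) 0)%:E <= M%:E)%E ->
  (\int[P]_w (Num.max (X w - c) 0)%:E)%E \is a fin_num.
Proof.
move=> mX mY XY YM.
have mYp : measurable_fun setT (fun w => Num.max (Y w) 0) by exact: measurable_funrpos.
rewrite ge0_fin_numE; last by apply: integral_ge0 => w _; rewrite lee_fin le_max lexx orbT.
apply: (le_lt_trans _ (ltry (M + `|c|))).
apply: (@le_trans _ _ (\int[P]_w ((Num.max (Y w) 0)%:E + `|c|%:E))%E).
  apply: ge0_le_integral => //.
  - by move=> w _; rewrite lee_fin le_max lexx orbT.
  - by apply/measurable_EFinP; apply: measurable_funrpos; exact: measurable_funB.
  - by apply: emeasurable_funD => //; apply/measurable_EFinP.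
  move=> w _; rewrite -EFinD lee_fin ge_max addr_ge0 ?le_max ?lexx ?orbT //.
  rewrite andbT lerD // ?(le_trans (XY w)) ?le_max ?lexx //.
  by rewrite -normrN ler_norm.
rewrite ge0_integralD //; last 2 first.
- by move=> w _; rewrite lee_fin le_max lexx orbT.
- by apply/measurable_EFinP.
by rewrite integral_cst // [X in (_ * X)%E]probability_setT mule1 EFinD leeD.
Qed.

Lemma ae_sum_max0_eq (R : realType) d (T : measurableType d) (mu : measure T R)
    (I : Type) (s : seq I) (X : T -> R) (Y : I -> T -> R) (c : R) :
  measurable_fun setT X -> (forall i, measurable_fun setT (Y i)) ->
  (forall i B, measurable B -> mu (Y i @^-1` B) = mu (X @^-1` B)) ->
  (\int[mu]_w (Num.max (X w - c) 0)%:E)%E \is a fin_num ->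
  (forall w, \sum_(i <- s) (Y i w - X w) = 0) ->
  {ae mu, forall w, \sum_(i <- s) Num.max (Y i w - c) 0
                    = (size s)%:R * Num.max (X w - c) 0}.
Proof.
move=> mX mY YX gXfin mean.
pose g t := Num.max (t - c) 0.
have g0 t : 0 <= g t by rewrite le_max lexx orbT.
have mg : measurable_fun setT g by apply: measurable_funrpos; exact: measurable_funB.
have mgX : measurable_fun setT (g \o X) by exact: measurableT_comp.
have int_gY i : (\int[mu]_w (g (Y i w))%:E = \int[mu]_w (g (X w))%:E)%E.
  exact: ge0_integral_comp_eq_law (mY i) mX (YX i) mg g0.
have int_DgX : (\int[mu]_w ((size s)%:R * g (X w))%:E
               = (size s)%:R%:E * \int[mu]_w (g (X w))%:E)%E.
  under eq_integral do rewrite EFinM.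
  by rewrite ge0_integralZl_EFin //; [move=> w _; rewrite lee_fin | exact/measurable_EFinP].
suff : {ae mu, forall w, (size s)%:R * g (X w) = \sum_(i <- s) g (Y i w)}.
  by apply: filterS => w /esym.
apply: ge0_le_integral_eq_ae_eq.
- by apply: measurable_funM.
- by apply: measurable_sum => i; exact: measurableT_comp.
- by move=> w; rewrite mulr_ge0 //=; exact: ler_mean_max0.
- by rewrite int_DgX fin_numM.
under [RHS]eq_integral do rewrite -sumEFin.
rewrite ge0_integral_sum //; last 2 first.
- by move=> i; apply/measurable_EFinP; exact: measurableT_comp.
- by move=> i w _; rewrite lee_fin.
rewrite int_DgX (eq_bigr _ (fun i _ => int_gY i)) big_const_seq count_predT.
by rewrite iter_addr_0 mule_natl.
Qed.

Lemma ae_forall_count d (T : measurableType d) (R : realType) (mu : measure T R)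
    (I : countType) (Q : I -> T -> Prop) :
  (forall i, {ae mu, forall w, Q i w}) -> {ae mu, forall w, forall i, Q i w}.
Proof.
move=> aeQ.
have : {ae mu, forall w, forall n, if unpickle n is Some i then Q i w else True}.
  by apply: ae_foralln => n; case: (unpickle n) => [i|]; [exact: aeQ | exact: aeW].
by apply: filterS => w Qw i; have := Qw (pickle i); rewrite pickleK.
Qed.

Section neighbor_seq.
Variables (V : choiceType) (adj : V -> V -> Prop).
Hypothesis adj_lf : locally_finite adj.

Definition neighbor_seq (x : V) : seq V := finmap.enum_fset (fset_set (neighbors adj x)).

Lemma mem_neighbor_seq x y : y \in neighbor_seq x <-> adj x y.
Proof. by rewrite in_fset_set //; split => [/set_mem|/mem_set]. Qed.

Lemma laplacianE (R : realType) (u : V -> R) x :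
  laplacian adj u x = \sum_(y <- neighbor_seq x) (u y - u x).
Proof. by rewrite /laplacian fsbig_finite. Qed.

Variable o : V.

Fixpoint ball (n : nat) : seq V :=
  if n is n'.+1 then ball n' ++ flatten [seq neighbor_seq x | x <- ball n'] else [:: o].

Hypothesis adj_connected : connected_graph adj.

Lemma ball_cover x : exists n, x \in ball n.
Proof.
elim: (clos_rt_rtn1 _ _ _ _ (adj_connected o x)) => [|y z yz _ [n yn]].
  by exists 0%N; rewrite mem_seq1.
exists n.+1; rewrite /= mem_cat; apply/orP; right.
by apply/flatten_mapP; exists y => //; apply/mem_neighbor_seq.
Qed.

Lemma ae_forall_vertex d (T : measurableType d) (R : realType) (mu : measure T R)
    (Q : V -> T -> Prop) :
  (forall x, {ae mu, forall w, Q x w}) -> {ae mu, forall w, forall x, Q x w}.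
Proof.
move=> aeQ.
have := ae_forall_count (fun nk : nat * nat => aeQ (nth o (ball nk.1) nk.2)).
apply: filterS => w Qw x; have [n xn] := ball_cover x.
by have := Qw (n, index x (ball n)); rewrite /= nth_index.
Qed.

End neighbor_seq.

Lemma gamma_invariant_law_coord (R : realType) (V : Type) (adj : V -> V -> Prop)
    (Gamma : set (V -> V)) d (Omega : measurableType d) (P : probability Omega R)
    (h : Omega -> V -> R) :
  automorphism_group adj Gamma -> transitive_action Gamma ->
  gamma_invariant_law P Gamma h ->
  forall x y (B : set R), measurable B ->
  P ((fun w => h w x) @^-1` B) = P ((fun w => h w y) @^-1` B).
Proof.
move=> [_ _ _ Gamma_inv] Gamma_trans h_law x y B mB.
have [a Ga axy] := Gamma_trans x y.
have [b _ [ab ba]] := Gamma_inv a Ga.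
have := h_law a b Ga ab ba ((fun f => f y) @^-1` B).
rewrite /preimage /= -axy ab; apply; apply: sub_sigma_algebra.
by exists (a x), B.
Qed.

Theorem lemma5p4 (R : realType) (V : choiceType) (adj : V -> V -> Prop)
  (Gamma : set (V -> V))
  (d : measure_display) (Omega : measurableType d) (P : probability Omega R)
  (h u v : Omega -> V -> R) :
  simple_graph adj -> infinite_graph V -> connected_graph adj ->
  locally_finite adj -> vertex_transitive adj ->
  automorphism_group adj Gamma -> transitive_action Gamma ->
  random_function h -> gamma_invariant_law P Gamma h ->
  (forall w x, laplacian adj (h w) x = 0) ->
  random_function u -> random_function v ->
  (forall w x, 0 <= u w x) ->
  (forall w x, h w x = v w x - u w x) ->
  (exists M : R, forall x,
      (\int[P]_w (Num.max (v w x) 0)%:E <= M%:E)%E) ->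
  {ae P, forall w, forall x y, h w x = h w y}.
Proof.
move=> _ V_infinite conn lf _ Gamma_aut Gamma_trans mh h_law harm _ mv u_ge0 hvu [M vM].
have /set0P[x0 _] : [set: V] != set0.
  by apply/negP => /eqP V0; apply: V_infinite; rewrite V0.
have hv w x : h w x <= v w x by rewrite hvu gerBl.
have mean w x : \sum_(y <- neighbor_seq adj x) (h w y - h w x) = 0.
  by rewrite -laplacianE.
have : {ae P, forall w, forall x (q : rat),
    \sum_(y <- neighbor_seq adj x) Num.max (h w y - ratr q) 0
    = (size (neighbor_seq adj x))%:R * Num.max (h w x - ratr q) 0}.
  apply: (ae_forall_vertex lf x0 conn) => x; apply: ae_forall_count => q.
  apply: ae_sum_max0_eq (mh x) (fun y => mh y) _ _ (fun w => mean w x).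
  - by move=> y B mB; exact: gamma_invariant_law_coord Gamma_aut Gamma_trans h_law _ _ _ mB.
  - exact: max0_subr_integral_fin_num (mh x) (mv x) (fun w => hv w x) (vM x).
apply: filterS => w h_max0.
have h_adj x y : adj x y -> h w x = h w y.
  move=> xy; apply/esym/(mean_max0_eq_const (mean w x) (h_max0 x)).
  exact/mem_neighbor_seq.
by move=> x y; elim: (conn x y) => [a b /h_adj | a | a b c _ -> _ ->].
Qed.
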